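(* Let $\alpha$ be an automorphism of a commutative ring $R$, $S=R[\theta;\alpha]$, and let $\rho$ be a nonzero non-unit of $R$. Then $S/\rho S$ is not an Artinian right $S$-module.
   Context: $R[\theta;\alpha]$: skew polynomial ring with $\theta r=\alpha(r)\theta$. *)

From HB Require Import structures.
From mathcomp Require Import all_boot all_order all_algebra.
Set Implicit Arguments. Unset Strict Implicit. Unset Printing Implicit Defensive.
Import Order.TTheory GRing.Theory Num.Theory.
Local Open Scope ring_scope.

(* The skew polynomial ring S = R[theta; alpha], theta r = alpha(r) theta.
   Elements of S are represented by their coefficient polynomials
   sum_i a_i theta^i  <-->  sum_i a_i 'X^i  in {poly R}  (left coefficients);
   addition is that of {poly R}, and multiplication is the skew product
     (a theta^i) (b theta^j) = a alpha^i(b) theta^(i+j). *)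
Definition skew_mul (R : comNzRingType) (alpha : R -> R) (p q : {poly R})
  : {poly R} :=
  \sum_(i < size p) \sum_(j < size q)
     ((p`_i * iter i alpha q`_j) *: 'X^(i + j)).

(* A right S-submodule of the cyclic right S-module S / rho S, described
   (via the canonical projection S -> S/rho S) by its full preimage N in S:
   N contains rho S, is an additive subgroup, and is closed under right
   multiplication by S.  Every submodule of S/rho S is the image of exactly
   one such N. *)
Definition quot_submodule (R : comNzRingType) (alpha : R -> R) (rho : R)
  (N : {poly R} -> Prop) : Prop :=
  [/\ (forall s, N (skew_mul alpha rho%:P s)),
      N 0,
      (forall x y, N x -> N y -> N (x - y)) &
      (forall x s, N x -> N (skew_mul alpha x s))].

Definition quot_artinian (R : comNzRingType) (alpha : R -> R) (rho : R) : Prop :=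
  forall N : nat -> {poly R} -> Prop,
    (forall n, quot_submodule alpha rho (N n)) ->
    (forall n x, N n.+1 x -> N n x) ->
    exists n0, forall n, (n0 <= n)%N -> forall x, N n x <-> N n0 x.

(* The submodules N_n = rho S + theta^n S, i.e. the skew polynomials whose
   coefficients of theta^0, ..., theta^(n-1) lie in rho R, form a descending
   chain.  It never stabilizes: theta^n lies in N_n, but not in N_(n+1) since
   rho is not a unit. *)
From HB Require Import structures.
From mathcomp Require Import all_boot all_order all_algebra.
Import GRing.Theory.
Local Open Scope ring_scope.

Section SkewMulLowCoef.
Variables (R : comNzRingType) (alpha : R -> R) (I : R -> Prop).
Hypotheses (I0 : I 0) (ID : forall x y, I x -> I y -> I (x + y))
  (IMr : forall x y, I x -> I (x * y)).

Lemma skew_mul_low_coef n (p q : {poly R}) :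
  (forall i, (i < n)%N -> I p`_i) ->
  forall k, (k < n)%N -> I (skew_mul alpha p q)`_k.
Proof.
move=> Ip k ltkn; rewrite /skew_mul coef_sum.
apply: (big_ind I) => // i _; rewrite coef_sum.
apply: (big_ind I) => // j _; rewrite coefZ coefXn.
case: eqP => [k_ij | _]; last by rewrite mulr0.
by rewrite mulr1; apply/IMr/Ip; rewrite (leq_ltn_trans _ ltkn) // k_ij leq_addr.
Qed.

End SkewMulLowCoef.

Section LowCoefChain.
Variables (R : comNzRingType) (alpha : R -> R) (rho : R).

Definition multiple_of (x : R) := exists c, x = rho * c.

Lemma multiple_of0 : multiple_of 0.
Proof. by exists 0; rewrite mulr0. Qed.

Lemma multiple_ofD x y : multiple_of x -> multiple_of y -> multiple_of (x + y).
Proof. by move=> [a ->] [b ->]; exists (a + b); rewrite mulrDr. Qed.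

Lemma multiple_ofB x y : multiple_of x -> multiple_of y -> multiple_of (x - y).
Proof. by move=> [a ->] [b ->]; exists (a - b); rewrite mulrBr. Qed.

Lemma multiple_ofMr x y : multiple_of x -> multiple_of (x * y).
Proof. by move=> [a ->]; exists (a * y); rewrite mulrA. Qed.

Definition low_coefs_multiple n (p : {poly R}) :=
  forall i, (i < n)%N -> multiple_of p`_i.

Lemma low_coefs_multiple_submodule n :
  quot_submodule alpha rho (low_coefs_multiple n).
Proof.
have skew_closed p s : low_coefs_multiple n p ->
    low_coefs_multiple n (skew_mul alpha p s).
  apply: skew_mul_low_coef;
  [exact: multiple_of0 | exact: multiple_ofD | exact: multiple_ofMr].
split=> [s | i _ | x y Nx Ny i lt_in | x s /skew_closed //].
- apply: skew_closed => i _; rewrite coefC.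
  by case: eqP => _; [exists 1; rewrite mulr1 | exact: multiple_of0].
- by rewrite coef0; exact: multiple_of0.
- by rewrite coefB; apply: multiple_ofB; [apply: Nx | apply: Ny].
Qed.

Lemma low_coefs_multipleS n p :
  low_coefs_multiple n.+1 p -> low_coefs_multiple n p.
Proof. by move=> Np i lt_in; apply/Np/ltnW. Qed.

Lemma low_coefs_multiple_Xn n : low_coefs_multiple n 'X^n.
Proof. by move=> i lt_in; rewrite coefXn (ltn_eqF lt_in); exact: multiple_of0. Qed.

Lemma low_coefs_multiple_XnS n :
  low_coefs_multiple n.+1 'X^n -> exists u, rho * u = 1.
Proof. by move=> /(_ n (ltnSn n)); rewrite coefXn eqxx => -[u]; exists u. Qed.

End LowCoefChain.

Theorem lemma4p8 (R : comNzRingType) (alpha : {rmorphism R -> R})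
  (alpha_bij : bijective alpha) (rho : R)
  (rho_nz : rho != 0) (rho_nonunit : ~ (exists u : R, rho * u = 1)) :
  ~ quot_artinian alpha rho.
Proof.
move=> artinian.
have [n0 stable] := artinian _ (@low_coefs_multiple_submodule _ alpha rho)
  (@low_coefs_multipleS _ rho).
apply/rho_nonunit/(@low_coefs_multiple_XnS _ _ n0).
exact/(stable n0.+1 (leqnSn n0))/low_coefs_multiple_Xn.
Qed.
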